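(* Let $f:[0,1]\to[0,1]$ be continuous and strictly increasing with $f(0)=0$, $f(1)=1$, and $f(y)=e$ for some $y,e\in\,]0,1[$ with $y>e$; put $x=f(e)$ (so $x<e$). Let $a=\lim_{n\to+\infty}f^{(n)}(x)$ and $d=\lim_{n\to+\infty}f^{(-n)}(x)$. Let $F:[x,e]^2\to[f(x),e]$ be commutative and non-decreasing with $F(s,e)=s$ and $F(s,x)=f(s)$ for all $s\in[x,e]$, and such that for all $s,t,u\in\,]x,e]$ with $F(s,t)\in\,]f^{(n+1)}(e),f^{(n)}(e)]$ and $F(t,u)\in\,]f^{(m+1)}(e),f^{(m)}(e)]$, $n,m\in\{0,1\}$, $$f^{(m)}\big(F(s,f^{(-m)}(F(t,u)))\big)=f^{(n)}\big(F(f^{(-n)}(F(s,t)),u)\big).$$ Then the function $U:]a,d[^2\to\,]a,d[$ given by $$U(s,t)=f^{(n+m)}\big(F(f^{(-n)}(s),f^{(-m)}(t))\big)\quad\text{if }s\in\,]f^{(n+1)}(e),f^{(n)}(e)],\ t\in\,]f^{(m+1)}(e),f^{(m)}(e)],\ n,m\in\mathbb{Z},$$ is well defined and is a uninorm on $]a,d[$, i.e., it is commutative, associative, non-decreasing in each variable, and $e$ is its neutral element.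
   Context: For a continuous strictly increasing bijection $f:[0,1]\to[0,1]$: $f^{(0)}=\mathrm{id}$, $f^{(n)}=f\circ f^{(n-1)}$ and $f^{(-n)}=f^{-1}\circ f^{(-n+1)}$ for $n\in\mathbb{N}$, where $f^{-1}$ is the inverse function of $f$. *)

From Stdlib Require Import Reals Lra ZArith ClassicalEpsilon.
Open Scope R_scope.

Definition cont_on_01 (f : R -> R) : Prop :=
  forall x, 0 <= x <= 1 -> forall eps, 0 < eps ->
    exists delta, 0 < delta /\
      forall y, 0 <= y <= 1 -> Rabs (y - x) < delta -> Rabs (f y - f x) < eps.

(* the inverse function f^{-1} of f : [0,1] -> [0,1] (chosen by epsilon;
   for a bijection of [0,1] it is the unique preimage in [0,1]) *)
Definition finv (f : R -> R) (y : R) : R :=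
  epsilon (inhabits 0) (fun x => 0 <= x <= 1 /\ f x = y).

Definition fiter (f : R -> R) (n : Z) : R -> R :=
  match n with
  | Z0 => fun s => s
  | Zpos p => Nat.iter (Pos.to_nat p) f
  | Zneg p => Nat.iter (Pos.to_nat p) (finv f)
  end.

Definition is_uninorm_on (a d e : R) (U : R -> R -> R) : Prop :=
  a < e < d /\
  (forall s t, a < s < d -> a < t < d -> a < U s t < d) /\
  (forall s t, a < s < d -> a < t < d -> U s t = U t s) /\
  (forall s t u, a < s < d -> a < t < d -> a < u < d ->
      U (U s t) u = U s (U t u)) /\
  (forall s s' t t', a < s < d -> a < s' < d -> a < t < d -> a < t' < d ->
      s <= s' -> t <= t' -> U s t <= U s' t') /\
  (forall s, a < s < d -> U s e = s /\ U e s = s).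

From Stdlib Require Import Reals ZArith Lra Lia ClassicalEpsilon.
Open Scope R_scope.

(* Since f(e) < e, the orbit (f^(n)(e))_{n in Z} decreases strictly from d to a, so
   ]a,d[ is the disjoint union of the blocks ]f^(n+1)(e), f^(n)(e)], and f^(-n) maps
   the n-th block onto the base block ]f(e), e] on which F acts; U is F transported to
   each pair of blocks.  As F(s,t) >= F(f(e),t) = f(t) > f(f(e)), F(s,t) lies in block 0
   or 1, so after shifting back to the base block associativity of U is exactly the
   hypothesis on F, while F(s,t) <= t and F(s',t) >= f(t) give monotonicity across
   neighbouring blocks. *)

Section Iterates.

Variable f : R -> R.
Hypothesis f_lt : forall s t, 0 <= s <= 1 -> 0 <= t <= 1 -> s < t -> f s < f t.
Hypothesis f_in01 : forall s, 0 <= s <= 1 -> 0 <= f s <= 1.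
Hypothesis f_onto : forall t, 0 <= t <= 1 -> exists s, 0 <= s <= 1 /\ f s = t.

Lemma finv_spec t : 0 <= t <= 1 -> 0 <= finv f t <= 1 /\ f (finv f t) = t.
Proof. intros Ht. unfold finv. apply epsilon_spec, f_onto, Ht. Qed.

Lemma finv_f s : 0 <= s <= 1 -> finv f (f s) = s.
Proof.
  intros Hs. destruct (finv_spec (f s) (f_in01 s Hs)) as [Hin Heq].
  destruct (Rtotal_order (finv f (f s)) s) as [H | [H | H]]; auto;
    apply f_lt in H; auto; lra.
Qed.

Lemma finv_lt s t : 0 <= s <= 1 -> 0 <= t <= 1 -> s < t -> finv f s < finv f t.
Proof.
  intros Hs Ht Hst.
  destruct (finv_spec s Hs) as [Hs' Hfs]. destruct (finv_spec t Ht) as [Ht' Hft].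
  destruct (Rlt_le_dec (finv f s) (finv f t)) as [H | [H | H]]; auto.
  - apply f_lt in H; auto. lra.
  - rewrite <- H in Hfs. lra.
Qed.

Lemma fiter_nat k s : fiter f (Z.of_nat k) s = Nat.iter k f s.
Proof. destruct k; [reflexivity |]. simpl. now rewrite SuccNat2Pos.id_succ. Qed.

Lemma fiter_opp_nat k s : fiter f (- Z.of_nat k) s = Nat.iter k (finv f) s.
Proof. destruct k; [reflexivity |]. simpl. now rewrite SuccNat2Pos.id_succ. Qed.

Lemma fiter_in01 n s : 0 <= s <= 1 -> 0 <= fiter f n s <= 1.
Proof.
  intros Hs. destruct n as [| p | p]; simpl; [exact Hs | |];
    induction (Pos.to_nat p); simpl; auto. now apply finv_spec.
Qed.

Lemma fiter_succ n s : 0 <= s <= 1 -> fiter f (n + 1) s = f (fiter f n s).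
Proof.
  intros Hs. destruct (Z.le_gt_cases 0 n) as [Hn | Hn].
  - replace n with (Z.of_nat (Z.to_nat n)) by lia.
    replace (Z.of_nat (Z.to_nat n) + 1)%Z with (Z.of_nat (S (Z.to_nat n))) by lia.
    now rewrite !fiter_nat.
  - replace n with (- Z.of_nat (S (Z.to_nat (- n - 1))))%Z by lia.
    replace (- Z.of_nat (S (Z.to_nat (- n - 1))) + 1)%Z
      with (- Z.of_nat (Z.to_nat (- n - 1)))%Z by lia.
    rewrite !fiter_opp_nat. simpl. symmetry. apply finv_spec.
    rewrite <- fiter_opp_nat. now apply fiter_in01.
Qed.

Lemma fiter_pred n s : 0 <= s <= 1 -> fiter f (n - 1) s = finv f (fiter f n s).
Proof.
  intros Hs. replace n with ((n - 1) + 1)%Z at 2 by lia.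
  rewrite fiter_succ by exact Hs. rewrite finv_f; auto. now apply fiter_in01.
Qed.

Lemma fiter_add n m s : 0 <= s <= 1 -> fiter f n (fiter f m s) = fiter f (n + m) s.
Proof.
  intros Hs. induction n as [| n IH | n IH] using Z.peano_ind.
  - reflexivity.
  - unfold Z.succ. replace (n + 1 + m)%Z with (n + m + 1)%Z by lia.
    rewrite !fiter_succ, IH; auto. now apply fiter_in01.
  - replace (Z.pred n) with (n - 1)%Z by lia.
    replace (n - 1 + m)%Z with (n + m - 1)%Z by lia.
    rewrite !fiter_pred, IH; auto. now apply fiter_in01.
Qed.

Lemma fiter_lt n s t : 0 <= s <= 1 -> 0 <= t <= 1 -> s < t -> fiter f n s < fiter f n t.
Proof.
  intros Hs Ht Hst. induction n as [| n IH | n IH] using Z.peano_ind.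
  - exact Hst.
  - unfold Z.succ. rewrite !fiter_succ by assumption.
    apply f_lt; auto; now apply fiter_in01.
  - replace (Z.pred n) with (n - 1)%Z by lia. rewrite !fiter_pred by assumption.
    apply finv_lt; auto; now apply fiter_in01.
Qed.

Lemma fiter_le n s t : 0 <= s <= 1 -> 0 <= t <= 1 -> s <= t -> fiter f n s <= fiter f n t.
Proof.
  intros Hs Ht [Hst | ->]; [left; now apply fiter_lt | apply Rle_refl].
Qed.

End Iterates.

Lemma Z_crossing (P : Z -> Prop) N M :
  P N -> ~ P M -> (N <= M)%Z -> exists n, P n /\ ~ P (n + 1)%Z.
Proof.
  intros HN HM HNM.
  enough (H : forall k N, P N -> ~ P (N + Z.of_nat k)%Z -> exists n, P n /\ ~ P (n + 1)%Z).
  { apply (H (Z.to_nat (M - N)) N HN). now replace (N + Z.of_nat (Z.to_nat (M - N)))%Z with M by lia. }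
  clear. intros k. induction k as [| k IH]; intros N HN HM.
  - now rewrite Z.add_0_r in HM.
  - destruct (classic (P (N + 1)%Z)) as [H | H]; [| now exists N].
    apply (IH (N + 1)%Z H). now replace (N + 1 + Z.of_nat k)%Z with (N + Z.of_nat (S k))%Z by lia.
Qed.

Section Blocks.

Variables (f : R -> R) (e : R).
Hypothesis f_lt : forall s t, 0 <= s <= 1 -> 0 <= t <= 1 -> s < t -> f s < f t.
Hypothesis f_in01 : forall s, 0 <= s <= 1 -> 0 <= f s <= 1.
Hypothesis f_onto : forall t, 0 <= t <= 1 -> exists s, 0 <= s <= 1 /\ f s = t.
Hypothesis e_in01 : 0 <= e <= 1.
Hypothesis fe_lt_e : f e < e.

Definition in_block (n : Z) (s : R) : Prop := fiter f (n + 1) e < s <= fiter f n e.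

Lemma fiter_fe n : fiter f n (f e) = fiter f (n + 1) e.
Proof. now rewrite <- fiter_add. Qed.

Lemma orbit_lt_succ n : fiter f (n + 1) e < fiter f n e.
Proof. rewrite <- fiter_fe. apply fiter_lt; auto. Qed.

Lemma orbit_lt n m : (n < m)%Z -> fiter f m e < fiter f n e.
Proof.
  intros Hnm. replace m with (n + Z.of_nat (S (Z.to_nat (m - n - 1))))%Z by lia.
  induction (Z.to_nat (m - n - 1)) as [| k IH].
  - apply orbit_lt_succ.
  - replace (n + Z.of_nat (S (S k)))%Z with (n + Z.of_nat (S k) + 1)%Z by lia.
    eapply Rlt_trans; [apply orbit_lt_succ | exact IH].
Qed.

Lemma orbit_le n m : (n <= m)%Z -> fiter f m e <= fiter f n e.
Proof.
  intros Hnm. destruct (Z.eq_dec n m) as [-> | Hne]; [apply Rle_refl |].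
  left. apply orbit_lt. lia.
Qed.

Lemma in_block_in01 n s : in_block n s -> 0 <= s <= 1.
Proof.
  intros [H1 H2]. pose proof (fiter_in01 f f_in01 f_onto (n + 1) e e_in01).
  pose proof (fiter_in01 f f_in01 f_onto n e e_in01). lra.
Qed.

Lemma in_block_shift p n s : in_block n s -> in_block (p + n) (fiter f p s).
Proof.
  intros Hs. pose proof (in_block_in01 n s Hs) as Hs01. destruct Hs as [H1 H2].
  unfold in_block. replace (p + n + 1)%Z with (p + (n + 1))%Z by lia.
  rewrite <- !(fiter_add f f_lt f_in01 f_onto p) by exact e_in01. split.
  - apply fiter_lt; auto. now apply fiter_in01.
  - apply fiter_le; auto. now apply fiter_in01.
Qed.

Lemma in_block_base n s : in_block n s -> f e < fiter f (- n) s <= e.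
Proof.
  intros Hs. pose proof (in_block_shift (- n) n s Hs) as H.
  now replace (- n + n)%Z with 0%Z in H by lia.
Qed.

Lemma in_block_unique n m s : in_block n s -> in_block m s -> n = m.
Proof.
  intros [Hn1 Hn2] [Hm1 Hm2]. destruct (Z.lt_trichotomy n m) as [H | [H | H]]; auto.
  - pose proof (orbit_le (n + 1) m ltac:(lia)). lra.
  - pose proof (orbit_le (m + 1) n ltac:(lia)). lra.
Qed.

Lemma in_block_fiter_le m k t : in_block m t -> (0 <= k)%Z -> fiter f k t <= t.
Proof.
  intros Ht Hk. destruct (Z.eq_dec k 0) as [-> | Hk0]; [apply Rle_refl |].
  pose proof (in_block_shift k m t Ht) as [_ H]. destruct Ht as [Ht _].
  pose proof (orbit_le (m + 1) (k + m) ltac:(lia)). lra.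
Qed.

Lemma in_block_exists s N M : fiter f M e < s -> s <= fiter f N e -> exists n, in_block n s.
Proof.
  intros HM HN. destruct (Z_le_gt_dec N M) as [HNM | HNM].
  - destruct (Z_crossing (fun n => s <= fiter f n e) N M) as [n [H1 H2]]; auto; [lra |].
    exists n. split; [lra | exact H1].
  - pose proof (orbit_le M N ltac:(lia)). lra.
Qed.

Definition block_index (s : R) : Z := epsilon (inhabits 0%Z) (fun n => in_block n s).

Lemma block_index_eq n s : in_block n s -> block_index s = n.
Proof.
  intros Hs. apply (in_block_unique _ _ s); auto.
  unfold block_index. apply epsilon_spec. now exists n.
Qed.

Section Limits.

Variables a d : R.
Hypothesis a_lim : Un_cv (fun n : nat => fiter f (Z.of_nat n) (f e)) a.
Hypothesis d_lim : Un_cv (fun n : nat => fiter f (- Z.of_nat n)%Z (f e)) d.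

Lemma lim_lt_orbit n : a < fiter f n e.
Proof.
  assert (Hdec : Un_decreasing (fun k : nat => fiter f (Z.of_nat k) (f e))).
  { intros k. rewrite !fiter_fe. apply orbit_le. lia. }
  pose proof (decreasing_ineq _ _ Hdec a_lim (Z.abs_nat n)) as H.
  cbv beta in H. rewrite fiter_fe in H.
  pose proof (orbit_lt n (Z.of_nat (Z.abs_nat n) + 1) ltac:(lia)). lra.
Qed.

Lemma orbit_lt_lim n : fiter f n e < d.
Proof.
  assert (Hgrow : Un_growing (fun k : nat => fiter f (- Z.of_nat k) (f e))).
  { intros k. rewrite !fiter_fe. apply orbit_le. lia. }
  pose proof (growing_ineq _ _ Hgrow d_lim (S (S (Z.abs_nat n)))) as H.
  cbv beta in H. rewrite fiter_fe in H.
  pose proof (orbit_lt (- Z.of_nat (S (S (Z.abs_nat n))) + 1) n ltac:(lia)). lra.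
Qed.

Lemma in_block_between n s : in_block n s -> a < s < d.
Proof.
  intros [H1 H2]. pose proof (lim_lt_orbit (n + 1)). pose proof (orbit_lt_lim n). lra.
Qed.

Lemma between_in_block s : a < s < d -> exists n, in_block n s.
Proof.
  intros Hs.
  destruct (a_lim (s - a) ltac:(lra)) as [N HN]. specialize (HN N (le_n N)).
  destruct (d_lim (d - s) ltac:(lra)) as [N' HN']. specialize (HN' N' (le_n N')).
  unfold Rdist in HN, HN'. apply Rabs_def2 in HN. apply Rabs_def2 in HN'.
  rewrite fiter_fe in HN, HN'.
  apply (in_block_exists s (- Z.of_nat N' + 1) (Z.of_nat N + 1)); lra.
Qed.

End Limits.

Section Uninorm.

Variable F : R -> R -> R.
Hypothesis F_comm : forall s t, f e <= s <= e -> f e <= t <= e -> F s t = F t s.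
Hypothesis F_mono : forall s s' t t', f e <= s <= e -> f e <= s' <= e ->
  f e <= t <= e -> f e <= t' <= e -> s <= s' -> t <= t' -> F s t <= F s' t'.
Hypothesis F_range : forall s t, f e <= s <= e -> f e <= t <= e -> f (f e) <= F s t <= e.
Hypothesis F_e : forall s, f e <= s <= e -> F s e = s.
Hypothesis F_fe : forall s, f e <= s <= e -> F s (f e) = f s.
Hypothesis F_assoc : forall (s t u : R) (n m : Z),
  f e < s <= e -> f e < t <= e -> f e < u <= e ->
  (n = 0 \/ n = 1)%Z -> (m = 0 \/ m = 1)%Z ->
  fiter f (n + 1) e < F s t <= fiter f n e ->
  fiter f (m + 1) e < F t u <= fiter f m e ->
  fiter f m (F s (fiter f (- m) (F t u))) = fiter f n (F (fiter f (- n) (F s t)) u).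

Lemma F_le_r s t : f e <= s <= e -> f e <= t <= e -> F s t <= t.
Proof.
  intros Hs Ht. pose proof (F_mono s e t t Hs ltac:(lra) Ht Ht ltac:(lra) ltac:(lra)) as H.
  now rewrite (F_comm e t), F_e in H by lra.
Qed.

Lemma F_ge_f s t : f e <= s <= e -> f e <= t <= e -> f t <= F s t.
Proof.
  intros Hs Ht. pose proof (F_mono (f e) s t t ltac:(lra) Hs Ht Ht ltac:(lra) ltac:(lra)) as H.
  now rewrite (F_comm (f e) t), F_fe in H by lra.
Qed.

Lemma F_in_block01 s t : f e < s <= e -> f e < t <= e ->
  exists j, (j = 0 \/ j = 1)%Z /\ in_block j (F s t).
Proof.
  intros Hs Ht. pose proof (F_range s t ltac:(lra) ltac:(lra)).
  assert (f (f e) < F s t).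
  { pose proof (F_ge_f s t ltac:(lra) ltac:(lra)). pose proof (f_in01 e e_in01).
    assert (f (f e) < f t) by (apply f_lt; auto; lra). lra. }
  destruct (Rlt_le_dec (f e) (F s t)); [exists 0%Z | exists 1%Z];
    split; auto; unfold in_block; simpl; lra.
Qed.

Lemma F_in01 s t : f e < s <= e -> f e < t <= e -> 0 <= F s t <= 1.
Proof.
  intros Hs Ht. destruct (F_in_block01 s t Hs Ht) as [j [_ Hj]]. exact (in_block_in01 j _ Hj).
Qed.

Definition uninorm_of (s t : R) : R :=
  fiter f (block_index s + block_index t)
    (F (fiter f (- block_index s) s) (fiter f (- block_index t) t)).

Lemma uninorm_of_blocks n m s t : in_block n s -> in_block m t ->
  uninorm_of s t = fiter f (n + m) (F (fiter f (- n) s) (fiter f (- m) t)).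
Proof.
  intros Hs Ht. unfold uninorm_of. now rewrite (block_index_eq n s), (block_index_eq m t).
Qed.

Lemma uninorm_of_in_block n m s t : in_block n s -> in_block m t ->
  exists j, in_block (n + m + j) (uninorm_of s t).
Proof.
  intros Hs Ht. destruct (F_in_block01 _ _ (in_block_base n s Hs) (in_block_base m t Ht))
    as [j [_ Hj]].
  exists j. rewrite (uninorm_of_blocks n m) by assumption. now apply in_block_shift.
Qed.

Lemma uninorm_of_comm n m s t : in_block n s -> in_block m t ->
  uninorm_of s t = uninorm_of t s.
Proof.
  intros Hs Ht. pose proof (in_block_base n s Hs). pose proof (in_block_base m t Ht).
  rewrite (uninorm_of_blocks n m s t), (uninorm_of_blocks m n t s) by assumption.
  rewrite Z.add_comm, F_comm by lra. reflexivity.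
Qed.

Lemma uninorm_of_e_r n s : in_block n s -> uninorm_of s e = s.
Proof.
  intros Hs. assert (He : in_block 0 e) by (unfold in_block; simpl; lra).
  pose proof (in_block_base n s Hs).
  rewrite (uninorm_of_blocks n 0 s e), F_e by (assumption || lra). simpl.
  rewrite (fiter_add f f_lt f_in01 f_onto) by (eapply in_block_in01; eauto).
  now replace (n + 0 + - n)%Z with 0%Z by lia.
Qed.

Lemma uninorm_of_mono_l n n' m s s' t : in_block n s -> in_block n' s' -> in_block m t ->
  s <= s' -> uninorm_of s t <= uninorm_of s' t.
Proof.
  intros Hs Hs' Ht Hss'.
  pose proof (in_block_base n s Hs) as Bs. pose proof (in_block_base n' s' Hs') as Bs'.
  pose proof (in_block_base m t Ht) as Bt. pose proof (in_block_in01 m t Ht) as It.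
  pose proof (f_in01 e e_in01) as Ife.
  rewrite (uninorm_of_blocks n m s t), (uninorm_of_blocks n' m s' t) by assumption.
  destruct (Z.eq_dec n n') as [<- | Hnn'].
  - apply fiter_le; auto using F_in01. apply F_mono; try lra.
    apply fiter_le; auto; eapply in_block_in01; eauto.
  - assert (Hlt : (n' < n)%Z).
    { destruct (Z_lt_le_dec n n') as [H | H]; [| lia].
      destruct Hs as [Hs _]. destruct Hs' as [_ Hs'].
      pose proof (orbit_le (n + 1) n' ltac:(lia)). lra. }
    (* U(s,t) <= f^(n)(t) <= f^(n'+1)(t) <= U(s',t) *)
    assert (H1 : fiter f (n + m) (F (fiter f (- n) s) (fiter f (- m) t)) <= fiter f n t).
    { replace (fiter f n t) with (fiter f (n + m) (fiter f (- m) t))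
        by (rewrite (fiter_add f f_lt f_in01 f_onto) by exact It; f_equal; lia).
      apply fiter_le; auto using F_in01; try lra. apply F_le_r; lra. }
    assert (H2 : fiter f (n' + 1) t <= fiter f (n' + m) (F (fiter f (- n') s') (fiter f (- m) t))).
    { replace (fiter f (n' + 1) t) with (fiter f (n' + m) (f (fiter f (- m) t))).
      - apply fiter_le; auto using F_in01; try (apply f_in01; lra). apply F_ge_f; lra.
      - change (f (fiter f (- m) t)) with (fiter f 1 (fiter f (- m) t)).
        rewrite !(fiter_add f f_lt f_in01 f_onto) by (auto; now apply fiter_in01).
        f_equal. lia. }
    assert (H3 : fiter f n t <= fiter f (n' + 1) t).
    { replace (fiter f n t) with (fiter f (n' + 1) (fiter f (n - n' - 1) t))
        by (rewrite (fiter_add f f_lt f_in01 f_onto) by exact It; f_equal; lia).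
      apply fiter_le; auto.
      - now apply fiter_in01.
      - apply (in_block_fiter_le m); auto. lia. }
    lra.
Qed.

Lemma uninorm_of_fiter_l p j k v u : in_block j v -> in_block k u ->
  uninorm_of (fiter f p v) u = fiter f (p + k) (fiter f j (F (fiter f (- j) v) (fiter f (- k) u))).
Proof.
  intros Hv Hu. pose proof (in_block_in01 j v Hv) as Iv.
  pose proof (in_block_base j v Hv). pose proof (in_block_base k u Hu).
  rewrite (uninorm_of_blocks (p + j) k) by (try apply in_block_shift; assumption).
  rewrite (fiter_add f f_lt f_in01 f_onto (- (p + j))) by exact Iv.
  replace (- (p + j) + p)%Z with (- j)%Z by lia.
  rewrite (fiter_add f f_lt f_in01 f_onto (p + k)) by now apply F_in01.
  f_equal. lia.
Qed.

Lemma uninorm_of_assoc n m k s t u : in_block n s -> in_block m t -> in_block k u ->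
  uninorm_of (uninorm_of s t) u = uninorm_of s (uninorm_of t u).
Proof.
  intros Hs Ht Hu.
  pose proof (in_block_base n s Hs) as Bs. pose proof (in_block_base m t Ht) as Bt.
  pose proof (in_block_base k u Hu) as Bu.
  destruct (F_in_block01 _ _ Bs Bt) as [j [Hj Hv]].
  destruct (F_in_block01 _ _ Bt Bu) as [i [Hi Hw]].
  pose proof (in_block_base i _ Hw) as Bw.
  rewrite (uninorm_of_blocks n m s t), (uninorm_of_blocks m k t u) by assumption.
  rewrite (uninorm_of_comm n (m + k + i) s) by (try apply in_block_shift; assumption).
  rewrite (uninorm_of_fiter_l _ j k), (uninorm_of_fiter_l _ i n) by assumption.
  rewrite (F_comm (fiter f (- i) _)), (F_assoc _ _ _ j i) by (assumption || lra).
  f_equal. lia.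
Qed.

Lemma uninorm_of_is_uninorm_on a d :
  (forall s, a < s < d -> exists n, in_block n s) ->
  (forall n s, in_block n s -> a < s < d) ->
  is_uninorm_on a d e uninorm_of.
Proof.
  intros Hcover Hinside.
  assert (He : in_block 0 e) by (unfold in_block; simpl; lra).
  refine (conj (Hinside 0%Z e He) (conj _ (conj _ (conj _ (conj _ _))))).
  - intros s t Hs Ht. destruct (Hcover s Hs) as [n Hn], (Hcover t Ht) as [m Hm].
    destruct (uninorm_of_in_block n m s t Hn Hm) as [j Hj]. exact (Hinside _ _ Hj).
  - intros s t Hs Ht. destruct (Hcover s Hs) as [n Hn], (Hcover t Ht) as [m Hm].
    exact (uninorm_of_comm n m s t Hn Hm).
  - intros s t u Hs Ht Hu.
    destruct (Hcover s Hs) as [n Hn], (Hcover t Ht) as [m Hm], (Hcover u Hu) as [k Hk].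
    exact (uninorm_of_assoc n m k s t u Hn Hm Hk).
  - intros s s' t t' Hs Hs' Ht Ht' Hss' Htt'.
    destruct (Hcover s Hs) as [n Hn], (Hcover s' Hs') as [n' Hn'].
    destruct (Hcover t Ht) as [m Hm], (Hcover t' Ht') as [m' Hm'].
    apply Rle_trans with (uninorm_of s' t).
    { exact (uninorm_of_mono_l n n' m s s' t Hn Hn' Hm Hss'). }
    rewrite (uninorm_of_comm n' m s' t), (uninorm_of_comm n' m' s' t') by assumption.
    exact (uninorm_of_mono_l m m' n' t t' s' Hm Hm' Hn' Htt').
  - intros s Hs. destruct (Hcover s Hs) as [n Hn].
    rewrite <- (uninorm_of_comm n 0 s e Hn He). split; exact (uninorm_of_e_r n s Hn).
Qed.

End Uninorm.

End Blocks.

Theorem mainTheorem9 (f : R -> R) (y e a d : R) (F : R -> R -> R)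
  (hf_cont : cont_on_01 f)
  (hf_mono : forall s t, 0 <= s <= 1 -> 0 <= t <= 1 -> s < t -> f s < f t)
  (hf_into : forall s, 0 <= s <= 1 -> 0 <= f s <= 1)
  (hf_onto : forall t, 0 <= t <= 1 -> exists s, 0 <= s <= 1 /\ f s = t)
  (hf0 : f 0 = 0) (hf1 : f 1 = 1)
  (hy : 0 < y < 1) (he : 0 < e < 1) (hye : e < y) (hfy : f y = e)
  (ha : Un_cv (fun n : nat => fiter f (Z.of_nat n) (f e)) a)
  (hd : Un_cv (fun n : nat => fiter f (- Z.of_nat n)%Z (f e)) d)
  (hF_range : forall s t, f e <= s <= e -> f e <= t <= e ->
      f (f e) <= F s t <= e)
  (hF_comm : forall s t, f e <= s <= e -> f e <= t <= e -> F s t = F t s)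
  (hF_mono : forall s s' t t', f e <= s <= e -> f e <= s' <= e ->
      f e <= t <= e -> f e <= t' <= e -> s <= s' -> t <= t' ->
      F s t <= F s' t')
  (hF_e : forall s, f e <= s <= e -> F s e = s)
  (hF_x : forall s, f e <= s <= e -> F s (f e) = f s)
  (hF_assoc : forall (s t u : R) (n m : Z),
      f e < s <= e -> f e < t <= e -> f e < u <= e ->
      (n = 0 \/ n = 1)%Z -> (m = 0 \/ m = 1)%Z ->
      fiter f (n + 1) e < F s t <= fiter f n e ->
      fiter f (m + 1) e < F t u <= fiter f m e ->
      fiter f m (F s (fiter f (- m) (F t u)))
      = fiter f n (F (fiter f (- n) (F s t)) u)) :
  (forall s, a < s < d -> exists n : Z, fiter f (n + 1) e < s <= fiter f n e) /\
  exists U : R -> R -> R,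
    (forall (s t : R) (n m : Z), a < s < d -> a < t < d ->
       fiter f (n + 1) e < s <= fiter f n e ->
       fiter f (m + 1) e < t <= fiter f m e ->
       U s t = fiter f (n + m) (F (fiter f (- n) s) (fiter f (- m) t))) /\
    is_uninorm_on a d e U.
Proof.
  assert (he01 : 0 <= e <= 1) by lra.
  assert (hfe : f e < e) by (rewrite <- hfy at 2; apply hf_mono; lra).
  assert (Hcover : forall s, a < s < d -> exists n, in_block f e n s)
    by (eapply between_in_block; eauto).
  split; [exact Hcover |]. exists (uninorm_of f e F). split.
  - intros s t n m _ _ Hn Hm. eapply uninorm_of_blocks; eauto.
  - eapply uninorm_of_is_uninorm_on; eauto. intros n s. eapply in_block_between; eauto.
Qed.
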